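(* Let $\mathbf L=(L,\vee,\wedge,0,1)$ be a complemented lattice with $0\neq 1$ and let $a\in L$. Then: (i) $a\in a^{++}$ and $a^{+++}=a^+$; (ii) the poset $(x^+,\le)$ is an antichain for every $x\in L$ if and only if $\mathbf L$ has no sublattice that is isomorphic to the lattice $\mathbf N_5$ and contains $0$ and $1$; (iii) $(a^+,\le)$ is convex, i.e. if $b,c\in a^+$, $d\in L$ and $b\le d\le c$, then $d\in a^+$; (iv) if the mapping $x\mapsto x^{++}$ from $L$ to $2^L$ is not injective, then $\mathbf L$ does not satisfy the identity $x^{++}=\{x\}$ for all $x\in L$.
   Context: A bounded lattice is complemented if every element $a$ has a complement $b$, i.e. $a\vee b=1$ and $a\wedge b=0$; complements need not be unique. For $a\in L$, $a^+:=\{x\in L\mid a\vee x=1,\ a\wedge x=0\}$ is the set of all complements of $a$. For $A\subseteq L$, $A^+:=\{x\in L\mid a\vee x=1\text{ and }a\wedge x=0\text{ for all }a\in A\}$. Thus $a^{++}=(a^+)^+$ and $a^{+++}=((a^+)^+)^+$. A singleton $\{x\}$ is identified with $x$. $\mathbf N_5$ is the five-element non-modular lattice $\{0,a,b,c,1\}$ with $0<a<c<1$ and $b$ incomparable to $a$ and $c$. *)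

From HB Require Import structures.
From mathcomp Require Import all_boot all_order.
Set Implicit Arguments. Unset Strict Implicit. Unset Printing Implicit Defensive.
Import Order.TTheory.
Local Open Scope order_scope.

Definition cset {d} {T : tbLatticeType d} (A : T -> Prop) : T -> Prop :=
  fun x => forall a, A a -> a `|` x = \top /\ a `&` x = \bot.

Definition sing {T : Type} (a : T) : T -> Prop := fun x => x = a.

Definition cpl {d} {T : tbLatticeType d} (a : T) : T -> Prop := cset (sing a).

Definition seteq {T : Type} (A B : T -> Prop) : Prop := forall x, A x <-> B x.

Definition complemented {d} (T : tbLatticeType d) : Prop :=
  forall a : T, exists b : T, a `|` b = \top /\ a `&` b = \bot.

(* The lattice N5 = {0, a, b, c, 1}, 0 < a < c < 1, b incomparable to a, c *)
Inductive N5 := N0 | Na | Nb | Nc | N1.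

Definition n5_le (x y : N5) : bool :=
  match x, y with
  | N0, _ => true
  | _, N1 => true
  | Na, Na | Na, Nc | Nb, Nb | Nc, Nc => true
  | _, _ => false
  end.

Definition n5_join (x y : N5) : N5 :=
  if n5_le x y then y else if n5_le y x then x else N1.
Definition n5_meet (x y : N5) : N5 :=
  if n5_le x y then x else if n5_le y x then y else N0.

(* L has a sublattice isomorphic to N5 containing 0 and 1:
   an injective lattice homomorphism N5 -> L whose image contains 0 and 1
   (its image is then such a sublattice, and conversely). *)
Definition has_N5_01 {d} (T : tbLatticeType d) : Prop :=
  exists f : N5 -> T,
    injective f /\
    (forall x y, f (n5_join x y) = f x `|` f y) /\
    (forall x y, f (n5_meet x y) = f x `&` f y) /\
    (exists x, f x = \bot) /\ (exists y, f y = \top).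

From HB Require Import structures.
From mathcomp Require Import all_boot all_order.
Import Order.TTheory.
Set Implicit Arguments. Unset Strict Implicit.
Local Open Scope order_scope.

(* Being complements is a symmetric relation, so A |-> A^+ is the polarity of
   a Galois connection: A is contained in A^++ and ^+ is antitone, whence
   A^+++ = A^+, and (iv) follows from a in a^++.  Convexity of A^+ holds
   because b <= d <= c gives a \/ d >= a \/ b = 1 and a /\ d <= a /\ c = 0.
   For (ii): in a copy of N5 containing 0 and 1, the elements a < c are both
   complements of b; conversely, two complements y < z of the same x form,
   together with x, 0 and 1, such a copy of N5. *)

Section Polarity.
Context {d : Order.disp_t} {T : tbLatticeType d}.
Implicit Types (A B : T -> Prop) (a b c e x y z : T).

Lemma cplP a b : cpl a b <-> a `|` b = \top /\ a `&` b = \bot.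
Proof. by split=> [/(_ a erefl) | Hab _ ->]. Qed.

Lemma cplC a b : cpl a b -> cpl b a.
Proof. by move=> /cplP[Jab Mab]; apply/cplP; rewrite joinC meetC. Qed.

Lemma mem_cset2 A x : A x -> cset (cset A) x.
Proof. by move=> Ax b Ab; apply/cplP/cplC/cplP; apply: Ab. Qed.

Lemma cset_anti A B : (forall x, A x -> B x) -> forall x, cset B x -> cset A x.
Proof. by move=> AB x Bx a /AB; apply: Bx. Qed.

Lemma cset3 A : seteq (cset (cset (cset A))) (cset A).
Proof. by move=> x; split; [apply: cset_anti; apply: mem_cset2 | apply: mem_cset2]. Qed.

Lemma cset_convex A b c e :
  cset A b -> cset A c -> b <= e -> e <= c -> cset A e.
Proof.
move=> Ab Ac be ec a Aa; have [Jab _] := Ab a Aa; have [_ Mac] := Ac a Aa.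
split; apply/le_anti.
- by rewrite lex1 -Jab leU2.
- by rewrite le0x -Mac leI2.
Qed.

Lemma cset2_cpl_inj x y :
  seteq (cset (cpl x)) (sing x) -> seteq (cset (cpl x)) (cset (cpl y)) -> y = x.
Proof. by move=> Sx Exy; apply/Sx/Exy/mem_cset2. Qed.

Lemma cplx0 x : cpl x \bot -> x = \top.
Proof. by move=> /cplP[]; rewrite joinx0. Qed.

Lemma cplx1 x : cpl x \top -> x = \bot.
Proof. by move=> /cplP[_]; rewrite meetx1. Qed.

Lemma cplxx x : cpl x x -> x = \bot.
Proof. by move=> /cplP[_]; rewrite meetxx. Qed.

End Polarity.

Lemma n5_inj_uniq (T : eqType) (f : N5 -> T) :
  uniq [:: f N0; f Na; f Nb; f Nc; f N1] -> injective f.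
Proof.
by move=> Uf u v; case: u; case: v => // Euv; move: Uf;
  rewrite Euv /= !inE eqxx ?orbT ?andbF.
Qed.

Section N5Complements.
Context {d : Order.disp_t} {T : tbLatticeType d}.

Lemma n5_hom_cpl (f : N5 -> T) :
  (forall u v, f (n5_join u v) = f u `|` f v) ->
  (forall u v, f (n5_meet u v) = f u `&` f v) ->
  (exists u, f u = \bot) -> (exists v, f v = \top) ->
  [/\ cpl (f Nb) (f Na), cpl (f Nb) (f Nc) & f Na <= f Nc].
Proof.
move=> fJ fM [u fu] [v fv].
have f0 : f N0 = \bot by rewrite -(meetx0 (f N0)) -fu -fM; case: u {fu}.
have f1 : f N1 = \top by rewrite -(joinx1 (f N1)) -fv -fJ; case: v {fv}.
by split; [apply/cplP; rewrite -fJ -fM .. | apply/meet_idPl; rewrite -fM].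
Qed.

Lemma has_N5_01_cpl : has_N5_01 T -> exists x y z : T, [/\ cpl x y, cpl x z & y < z].
Proof.
move=> [f [f_inj [fJ [fM [f0 f1]]]]].
have [Ha Hc ac] := n5_hom_cpl fJ fM f0 f1.
exists (f Nb), (f Na), (f Nc); split=> //.
by rewrite lt_neqAle ac andbT; apply/eqP => /f_inj.
Qed.

Section ComparableComplements.
Variables x y z : T.
Hypotheses (xy : cpl x y) (xz : cpl x z) (yz : y < z).

Lemma cpl_lt_neq0 : y != \bot.
Proof.
apply/eqP => y0; move: xy yz; rewrite y0 => /cplx0 x1.
by move: xz; rewrite x1 => /cplC/cplx1 ->; rewrite ltxx.
Qed.

Lemma cpl_lt_neq1 : z != \top.
Proof.
apply/eqP => z1; move: xz yz; rewrite z1 => /cplx1 x0.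
by move: xy; rewrite x0 => /cplC/cplx0 ->; rewrite ltxx.
Qed.

Let N5_elt (n : N5) : T :=
  match n with N0 => \bot | Na => y | Nb => x | Nc => z | N1 => \top end.

Lemma N5_elt_uniq : uniq [:: N5_elt N0; N5_elt Na; N5_elt Nb; N5_elt Nc; N5_elt N1].
Proof.
have y_gt0 : \bot < y by rewrite lt0x cpl_lt_neq0.
have z_lt1 : z < \top by rewrite ltx1 cpl_lt_neq1.
have x_neq0 : (x == \bot) = false.
  by apply/eqP => x0; move: xy yz; rewrite x0 => /cplC/cplx0 ->; rewrite lt1x.
have x_neq1 : (x == \top) = false.
  by apply/eqP => x1; move: xy; rewrite x1 => /cplC/cplx1 y0; move: y_gt0; rewrite y0 ltxx.
have y_neqx : (y == x) = false.
  by apply/eqP => yx; move: xy; rewrite -yx => /cplxx y0; move: y_gt0; rewrite y0 ltxx.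
have x_neqz : (x == z) = false.
  by apply/eqP => xz'; move: xz yz; rewrite xz' => /cplxx ->; rewrite ltx0.
rewrite /= !inE !negb_or (eq_sym \bot x) x_neq0 y_neqx x_neqz x_neq1.
have z_gt0 := lt_trans y_gt0 yz; have y_lt1 := lt_trans yz z_lt1.
by rewrite !lt_eqF // (lt_trans y_gt0 y_lt1).
Qed.

Lemma cpl_lt_has_N5_01 : has_N5_01 T.
Proof.
move/cplP: (xy) => [Jxy Mxy]; move/cplP: (xz) => [Jxz Mxz].
exists N5_elt; split; [|split; [|split]].
- exact/n5_inj_uniq/N5_elt_uniq.
- move=> u v; case: u; case: v => /=; symmetry;
  by rewrite ?(join0x, joinx0, join1x, joinx1, joinxx, Jxy, Jxz,
               joinC y x, joinC z x, joinC z y, join_r (ltW yz)).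
- move=> u v; case: u; case: v => /=; symmetry;
  by rewrite ?(meet0x, meetx0, meet1x, meetx1, meetxx, Mxy, Mxz,
               meetC y x, meetC z x, meetC z y, meet_l (ltW yz)).
- by split; [exists N0 | exists N1].
Qed.

End ComparableComplements.

Lemma cpl_antichainP :
  (forall x y z : T, cpl x y -> cpl x z -> y <= z -> y = z) <-> ~ has_N5_01 T.
Proof.
split=> [anti /has_N5_01_cpl [x [y [z [xy xz yz]]]] | noN5 x y z xy xz yz].
  by move: (lt_eqF yz); rewrite (anti x y z xy xz (ltW yz)) eqxx.
have [// | y_neq_z] := eqVneq y z; case: noN5.
by apply: (cpl_lt_has_N5_01 xy xz); rewrite lt_neqAle y_neq_z.
Qed.

End N5Complements.

Theorem proposition1 (d : Order.disp_t) (T : tbLatticeType d)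
  (Hc : complemented T) (H01 : (\bot : T) <> \top) (a : T) :
  (* (i) *)
  (cset (cpl a) a /\ seteq (cset (cset (cpl a))) (cpl a)) /\
  (* (ii) *)
  ((forall x y z : T, cpl x y -> cpl x z -> y <= z -> y = z) <-> ~ has_N5_01 T) /\
  (* (iii) *)
  (forall b c e : T, cpl a b -> cpl a c -> b <= e -> e <= c -> cpl a e) /\
  (* (iv) *)
  ((exists x y : T, x <> y /\ seteq (cset (cpl x)) (cset (cpl y))) ->
     ~ (forall x : T, seteq (cset (cpl x)) (sing x))).
Proof.
split; [split|split; [|split]].
- exact: mem_cset2.
- exact: cset3.
- exact: cpl_antichainP.
- exact: cset_convex.
- by move=> [x [y [xy Exy]]] S; apply: xy; rewrite (cset2_cpl_inj (S x) Exy).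
Qed.
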